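(* Let $\alpha\in[0,1]$, $\kappa_{rg}\in[0,1)$, $\kappa_{rs}>0$. Suppose that at iteration $k$ a step $s_k\neq 0$, a symmetric matrix $M_k$ and a residual $r_k$ satisfy $(H_k+M_k)s_k=-g_k+r_k$ with $\|r_k\|\le\min[\kappa_{rg}\|g_k\|,\kappa_{rs}\|M_ks_k\|]$, $M_k\succeq0$ and $H_k+M_k\succeq 0$, and moreover $$\lambda_{\min}(M_k)\le\bar\kappa_\lambda\|s_k\|^\alpha$$ for some constant $\bar\kappa_\lambda>1$. Then $$\lambda_{\min}(H_k)+\lambda_{\min}(M_k)\le\kappa_\lambda\max\{|\lambda_{\min}(H_k)|,\|g_k\|^{\alpha/(1+\alpha)}\}\quad\text{with }\kappa_\lambda=2\bar\kappa_\lambda^{1/(1+\alpha)}(1+\kappa_{rg}).$$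
   Context: $f:\mathbb{R}^n\to\mathbb{R}$ is twice continuously differentiable, $g_k=\nabla f(x_k)$, $H_k=\nabla^2 f(x_k)$. $\|\cdot\|$ is the Euclidean norm, $\lambda_{\min}$ the leftmost eigenvalue of a symmetric matrix, $M\succeq0$ means positive semidefinite. *)

From Stdlib Require Import Reals.
Open Scope R_scope.

(* Vectors / matrices of dimension n: only indices < n are meaningful. *)
Definition vec := nat -> R.
Definition mat := nat -> nat -> R.

Fixpoint rsum (n : nat) (f : nat -> R) : R :=
  match n with O => 0 | S m => rsum m f + f m end.

Definition dot (n : nat) (u v : vec) : R := rsum n (fun i => u i * v i).
Definition norm (n : nat) (v : vec) : R := sqrt (dot n v v).
Definition mv (n : nat) (A : mat) (v : vec) : vec :=
  fun i => rsum n (fun j => A i j * v j).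
Definition madd (A B : mat) : mat := fun i j => A i j + B i j.

Definition symmetric (n : nat) (A : mat) : Prop :=
  forall i j, (i < n)%nat -> (j < n)%nat -> A i j = A j i.
Definition psd (n : nat) (A : mat) : Prop :=
  forall v : vec, 0 <= dot n v (mv n A v).
Definition nonzerov (n : nat) (v : vec) : Prop :=
  exists i, (i < n)%nat /\ v i <> 0.
Definition eigenvalue (n : nat) (A : mat) (l : R) : Prop :=
  exists v : vec, nonzerov n v /\ forall i, (i < n)%nat -> mv n A v i = l * v i.
Definition is_lambda_min (n : nat) (A : mat) (l : R) : Prop :=
  eigenvalue n A l /\ forall mu, eigenvalue n A mu -> l <= mu.

(* real power x^y for x >= 0, with 0^y = 0 for y <> 0 and 0^0 = 1 *)
Definition powr (x y : R) : R :=
  if Req_EM_T x 0 then (if Req_EM_T y 0 then 1 else 0) else Rpower x y.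

(* Since lambda_min bounds the Rayleigh quotient of a symmetric matrix from below,
   (lH + lM) |s|^2 <= s^T (H + M) s = s^T (r - g) <= (1 + krg) |g| |s|.
   If lM <= |lH| the claim is immediate.  Otherwise t := lH + lM satisfies
   0 < t <= 2 lM <= 2 kbar |s|^alpha and t |s| <= (1 + krg) |g|; eliminating |s|
   gives t^(1+alpha) <= 2 kbar ((1 + krg) |g|)^alpha.
   The Rayleigh bound is proved variationally: the quadratic form attains its
   minimum on the unit sphere (Bolzano-Weierstrass coordinatewise), and every
   minimiser is an eigenvector. *)

From Stdlib Require Import Reals Lra Lia ClassicalEpsilon.
Open Scope R_scope.

Lemma rsum_ext n f g : (forall i, (i < n)%nat -> f i = g i) -> rsum n f = rsum n g.
Proof.
  induction n as [|n IH]; intros Hfg; simpl; [reflexivity|].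
  rewrite IH by (intros; apply Hfg; lia). rewrite Hfg by lia. reflexivity.
Qed.

Lemma rsum_eq0 n f : (forall i, (i < n)%nat -> f i = 0) -> rsum n f = 0.
Proof.
  intros Hf. transitivity (rsum n (fun _ => 0)); [now apply rsum_ext|].
  clear Hf. induction n as [|n IH]; simpl; [|rewrite IH]; lra.
Qed.

Lemma rsum_add n f g : rsum n (fun i => f i + g i) = rsum n f + rsum n g.
Proof. induction n as [|n IH]; simpl; [|rewrite IH]; lra. Qed.

Lemma rsum_scal n c f : rsum n (fun i => c * f i) = c * rsum n f.
Proof. induction n as [|n IH]; simpl; [|rewrite IH]; lra. Qed.

Lemma rsum_le n f g : (forall i, (i < n)%nat -> f i <= g i) -> rsum n f <= rsum n g.
Proof.
  induction n as [|n IH]; intros Hfg; simpl; [lra|].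
  assert (f n <= g n) by (apply Hfg; lia).
  assert (rsum n f <= rsum n g) by (apply IH; intros; apply Hfg; lia).
  lra.
Qed.

Lemma rsum_nonneg n f : (forall i, (i < n)%nat -> 0 <= f i) -> 0 <= rsum n f.
Proof.
  intros Hf. rewrite <- (rsum_eq0 n (fun _ => 0)) by reflexivity.
  now apply rsum_le.
Qed.

Lemma rsum_ge_term n f k :
  (forall i, (i < n)%nat -> 0 <= f i) -> (k < n)%nat -> f k <= rsum n f.
Proof.
  induction n as [|n IH]; intros Hf Hk; [lia|simpl].
  assert (0 <= rsum n f) by (apply rsum_nonneg; intros; apply Hf; lia).
  destruct (Nat.eq_dec k n) as [->|Hkn]; [lra|].
  assert (f k <= rsum n f) by (apply IH; [intros; apply Hf|]; lia).
  assert (0 <= f n) by (apply Hf; lia).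
  lra.
Qed.

Lemma rsum_swap n m F :
  rsum n (fun i => rsum m (fun j => F i j)) = rsum m (fun j => rsum n (fun i => F i j)).
Proof.
  induction n as [|n IH]; simpl.
  - symmetry. now apply rsum_eq0.
  - now rewrite IH, <- rsum_add.
Qed.

Lemma quad_nonneg_linear_coef_eq0 b q : (forall t, 0 <= 2 * t * b + t * t * q) -> b = 0.
Proof.
  intros Hquad. destruct (Req_dec b 0) as [|Hb]; [assumption|exfalso].
  assert (Hq1 : 0 < Rabs q + 1) by (pose proof (Rabs_pos q); lra).
  specialize (Hquad (- b / (Rabs q + 1))).
  replace (2 * (- b / (Rabs q + 1)) * b + - b / (Rabs q + 1) * (- b / (Rabs q + 1)) * q)
    with (b * b / (Rabs q + 1) * (q / (Rabs q + 1) - 2)) in Hquad by (field; lra).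
  assert (q / (Rabs q + 1) < 1).
  { apply Rmult_lt_reg_r with (Rabs q + 1); [lra|].
    unfold Rdiv. rewrite Rmult_assoc, Rinv_l, Rmult_1_r by lra. pose proof (Rle_abs q). lra. }
  assert (0 < b * b / (Rabs q + 1))
    by (apply Rdiv_lt_0_compat; [apply Rsqr_pos_lt|]; assumption).
  nra.
Qed.

Section Dot.

Variable n : nat.

Lemma dot_sym u v : dot n u v = dot n v u.
Proof. apply rsum_ext. intros; ring. Qed.

Lemma dot_combl a b x y z :
  dot n (fun i => a * x i + b * y i) z = a * dot n x z + b * dot n y z.
Proof. unfold dot. rewrite <- !rsum_scal, <- rsum_add. apply rsum_ext; intros; ring. Qed.

Lemma dot_combr a b x y z :
  dot n z (fun i => a * x i + b * y i) = a * dot n z x + b * dot n z y.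
Proof. rewrite dot_sym, dot_combl, (dot_sym x), (dot_sym y). reflexivity. Qed.

Lemma dot_self_nonneg v : 0 <= dot n v v.
Proof. apply rsum_nonneg. intros. nra. Qed.

Lemma sqr_le_dot_self v i : (i < n)%nat -> v i * v i <= dot n v v.
Proof. intros Hi. apply (rsum_ge_term n (fun i => v i * v i)); [intros; nra | exact Hi]. Qed.

Lemma dot_self_eq0 v : dot n v v = 0 -> forall i, (i < n)%nat -> v i = 0.
Proof. intros Hv i Hi. pose proof (sqr_le_dot_self v i Hi). nra. Qed.

Lemma dot_self_gt0 v : nonzerov n v -> 0 < dot n v v.
Proof.
  intros [i [Hi Hvi]]. pose proof (sqr_le_dot_self v i Hi).
  assert (0 < v i * v i) by (apply Rsqr_pos_lt; exact Hvi). lra.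
Qed.

Lemma nonzerov_of_dot_self_neq0 v : dot n v v <> 0 -> nonzerov n v.
Proof.
  intros Hv. apply NNPP. intros Hz. apply Hv, rsum_eq0. intros i Hi.
  destruct (Req_dec (v i) 0) as [->|Hne]; [ring|]. exfalso. apply Hz. now exists i.
Qed.

Lemma exists_unit_vec : (0 < n)%nat -> exists x, dot n x x = 1.
Proof.
  intros Hn. destruct n as [|n']; [lia|].
  exists (fun i => if Nat.eqb i n' then 1 else 0).
  unfold dot. simpl. rewrite Nat.eqb_refl, rsum_eq0; [ring|].
  intros i Hi. destruct (Nat.eqb_spec i n'); [lia|ring].
Qed.

Lemma norm_sqr v : norm n v * norm n v = dot n v v.
Proof. apply sqrt_sqrt, dot_self_nonneg. Qed.

Lemma dot_le_norm_mul u v : Rabs (dot n u v) <= norm n u * norm n v.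
Proof.
  assert (Hquad : forall t, 0 <= dot n u u + 2 * t * dot n u v + t * t * dot n v v).
  { intros t. pose proof (dot_self_nonneg (fun i => 1 * u i + t * v i)) as Hq.
    rewrite dot_combl, !dot_combr, (dot_sym v u) in Hq. lra. }
  assert (Hsq : dot n u v * dot n u v <= dot n u u * dot n v v).
  { pose proof (dot_self_nonneg u). pose proof (dot_self_nonneg v).
    destruct (Req_dec (dot n v v) 0) as [Hv0|Hv0].
    - assert (Huv : dot n u v = 0).
      { apply rsum_eq0. intros i Hi. rewrite (dot_self_eq0 v Hv0 i Hi). ring. }
      rewrite Huv. nra.
    - specialize (Hquad (- dot n u v / dot n v v)).
      replace (dot n u u + 2 * (- dot n u v / dot n v v) * dot n u v
               + (- dot n u v / dot n v v) * (- dot n u v / dot n v v) * dot n v v)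
        with ((dot n u u * dot n v v - dot n u v * dot n u v) / dot n v v)
        in Hquad by (field; exact Hv0).
      assert (0 < dot n v v) by lra.
      apply Rmult_le_compat_r with (r := dot n v v) in Hquad; [|lra].
      unfold Rdiv in Hquad. rewrite Rmult_assoc, Rinv_l, Rmult_1_r, Rmult_0_l in Hquad; lra. }
  rewrite <- sqrt_Rsqr_abs. unfold norm. rewrite <- sqrt_mult by apply dot_self_nonneg.
  apply sqrt_le_1_alt. unfold Rsqr. exact Hsq.
Qed.

End Dot.

Definition qform (n : nat) (A : mat) (x : vec) : R := dot n x (mv n A x).

Section QuadraticForm.

Variables (n : nat) (A : mat).

Lemma mv_comb a b x y i :
  mv n A (fun j => a * x j + b * y j) i = a * mv n A x i + b * mv n A y i.
Proof. unfold mv. rewrite <- !rsum_scal, <- rsum_add. apply rsum_ext; intros; ring. Qed.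

Lemma dot_mv_sym x y : symmetric n A -> dot n y (mv n A x) = dot n x (mv n A y).
Proof.
  intros HA. unfold dot, mv.
  transitivity (rsum n (fun i => rsum n (fun j => y i * A i j * x j))).
  { apply rsum_ext; intros. rewrite <- rsum_scal. apply rsum_ext; intros; ring. }
  rewrite rsum_swap. apply rsum_ext; intros j Hj.
  rewrite <- rsum_scal. apply rsum_ext; intros i Hi. rewrite (HA i j) by assumption. ring.
Qed.

Lemma qform_comb a b x y : symmetric n A ->
  qform n A (fun i => a * x i + b * y i)
  = a * a * qform n A x + 2 * a * b * dot n y (mv n A x) + b * b * qform n A y.
Proof.
  intros HA. unfold qform.
  transitivity (dot n (fun i => a * x i + b * y i)
                      (fun i => a * mv n A x i + b * mv n A y i)).
  { apply rsum_ext. intros. now rewrite mv_comb. }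
  rewrite dot_combl, !dot_combr, (dot_mv_sym y x HA). ring.
Qed.

Lemma qform_scal c x : qform n A (fun i => c * x i) = c * c * qform n A x.
Proof.
  unfold qform, dot. rewrite <- rsum_scal. apply rsum_ext. intros i _.
  unfold mv. rewrite (rsum_ext n _ (fun j => c * (A i j * x j))) by (intros; ring).
  rewrite rsum_scal. ring.
Qed.

Lemma qform_eq0 x : dot n x x = 0 -> qform n A x = 0.
Proof. intros Hx. apply rsum_eq0. intros i Hi. rewrite (dot_self_eq0 n x Hx i Hi). ring. Qed.

Lemma qform_ge_entry_bound x : dot n x x = 1 ->
  - rsum n (fun i => rsum n (fun j => Rabs (A i j))) <= qform n A x.
Proof.
  intros Hx. unfold qform, dot, mv.
  rewrite <- (Rmult_1_l (rsum _ _)), Ropp_mult_distr_l, <- rsum_scal.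
  apply rsum_le. intros i Hi. rewrite <- !rsum_scal. apply rsum_le. intros j Hj.
  assert (Hcoord : forall k, (k < n)%nat -> Rabs (x k) <= 1).
  { intros k Hk. pose proof (sqr_le_dot_self n x k Hk) as Hk2. rewrite Hx in Hk2.
    unfold Rabs. destruct (Rcase_abs (x k)); nra. }
  pose proof (Hcoord i Hi). pose proof (Hcoord j Hj).
  pose proof (Rabs_pos (x i)). pose proof (Rabs_pos (x j)).
  assert (Rabs (x i * (A i j * x j)) <= Rabs (A i j)).
  { rewrite !Rabs_mult. pose proof (Rabs_pos (A i j)).
    apply Rle_trans with (1 * (Rabs (A i j) * 1)); [|lra].
    apply Rmult_le_compat; try apply Rmult_le_compat; try apply Rmult_le_pos; lra. }
  pose proof (Rle_abs (- (x i * (A i j * x j)))). rewrite Rabs_Ropp in *. lra.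
Qed.

Lemma eigenvalue_of_sphere_min x0 : symmetric n A -> dot n x0 x0 = 1 ->
  (forall x, qform n A x0 * dot n x x <= qform n A x) -> eigenvalue n A (qform n A x0).
Proof.
  intros HA Hx0 Hmin. set (m := qform n A x0).
  set (y := fun i => mv n A x0 i - m * x0 i).
  (* Testing minimality against x0 + t y, the first-order term in t is 2 t <y, y>. *)
  assert (Hlin : forall t, 0 <= 2 * t * dot n y y
                     + t * t * (qform n A y - m * dot n y y)).
  { assert (Hy : dot n y (mv n A x0) - m * dot n y x0 = dot n y y).
    { unfold Rminus. rewrite <- (Rmult_1_l (dot n y (mv n A x0))), Ropp_mult_distr_l,
        <- dot_combr. apply rsum_ext. intros. unfold y. ring. }
    intros t. pose proof (Hmin (fun i => 1 * x0 i + t * y i)) as Ht.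
    rewrite qform_comb, dot_combl, !dot_combr, (dot_sym n x0 y) in Ht by exact HA.
    fold m in Ht. rewrite Hx0, <- Hy in Ht. rewrite <- Hy. lra. }
  assert (Hyy : dot n y y = 0) by exact (quad_nonneg_linear_coef_eq0 _ _ Hlin).
  exists x0. split; [apply nonzerov_of_dot_self_neq0; lra|].
  intros i Hi. pose proof (dot_self_eq0 n y Hyy i Hi). unfold y in *. lra.
Qed.

End QuadraticForm.

Definition strictly_increasing (phi : nat -> nat) : Prop :=
  forall a b, (a < b)%nat -> (phi a < phi b)%nat.

Lemma strictly_increasing_ge phi : strictly_increasing phi -> forall k, (k <= phi k)%nat.
Proof. intros Hphi k. induction k as [|k IH]; [lia|]. specialize (Hphi k (S k)). lia. Qed.

Lemma Un_cv_subseq u l phi :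
  strictly_increasing phi -> Un_cv u l -> Un_cv (fun k => u (phi k)) l.
Proof.
  intros Hphi Hu eps Heps. destruct (Hu eps Heps) as [N HN]. exists N.
  intros k Hk. apply HN. pose proof (strictly_increasing_ge phi Hphi k). lia.
Qed.

Lemma Un_cv_const c : Un_cv (fun _ => c) c.
Proof. intros eps Heps. exists O. intros. unfold Rdist. rewrite Rminus_diag_eq, Rabs_R0; auto. Qed.

Lemma Un_cv_rsum n (a : nat -> nat -> R) (b : nat -> R) :
  (forall i, (i < n)%nat -> Un_cv (fun k => a k i) (b i)) ->
  Un_cv (fun k => rsum n (a k)) (rsum n b).
Proof.
  induction n as [|n IH]; intros Hab; simpl.
  - apply Un_cv_const.
  - apply CV_plus; [apply IH; intros i Hi|]; apply Hab; lia.
Qed.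

Lemma ValAdh_subseq u l :
  ValAdh u l -> exists phi, strictly_increasing phi /\ Un_cv (fun k => u (phi k)) l.
Proof.
  intros Hl.
  assert (Hnear : forall N, exists p, (N <= p)%nat /\ Rabs (u p - l) < / (INR N + 1)).
  { intros N. destruct (Hl (disc l (RinvN N)) N) as [p Hp].
    - exists (RinvN N). intros y Hy. exact Hy.
    - exists p. exact Hp. }
  destruct (choice _ Hnear) as [c Hc].
  set (phi := fix phi k := match k with O => c O | S k => c (S (phi k)) end).
  assert (Hphi : strictly_increasing phi).
  { intros a b Hab. induction Hab as [|b Hab IH]; simpl.
    - destruct (Hc (S (phi a))). lia.
    - destruct (Hc (S (phi b))). lia. }
  assert (Hdist : forall k, Rabs (u (phi k) - l) < / (INR k + 1)).
  { intros [|k]; [apply Hc|]. simpl phi. destruct (Hc (S (phi k))) as [_ Hk].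
    apply Rlt_le_trans with (1 := Hk). apply Rinv_le_contravar; [pose proof (pos_INR (S k)); lra|].
    apply Rplus_le_compat_r, le_INR. pose proof (strictly_increasing_ge phi Hphi k). lia. }
  exists phi. split; [exact Hphi|].
  intros eps Heps. destruct (RinvN_cv Heps) as [N HN]. exists N. intros k Hk.
  specialize (HN k Hk). unfold Rdist in *. rewrite Rminus_0_r, Rabs_pos_eq in HN
    by (left; apply RinvN_pos).
  pose proof (Hdist k). simpl in HN. lra.
Qed.

Lemma bounded_vec_seq_subseq n (xs : nat -> vec) :
  (forall k i, (i < n)%nat -> Rabs (xs k i) <= 1) ->
  exists phi x, strictly_increasing phi /\
    forall i, (i < n)%nat -> Un_cv (fun k => xs (phi k) i) (x i).
Proof.
  intros Hb.
  (* diagonal extraction, one coordinate at a time *)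
  enough (Hm : forall m, (m <= n)%nat -> exists phi x, strictly_increasing phi /\
            forall i, (i < m)%nat -> Un_cv (fun k => xs (phi k) i) (x i)) by (apply Hm; lia).
  induction m as [|m IH]; intros Hm.
  - exists (fun k => k), (fun _ => 0). split; [intros a b; auto | intros; lia].
  - destruct IH as [phi [x [Hphi Hx]]]; [lia|].
    destruct (Bolzano_Weierstrass (fun k => xs (phi k) m) (fun c => -1 <= c <= 1)
                (compact_P3 (-1) 1)) as [xm Hxm].
    { intros k. pose proof (Hb (phi k) m ltac:(lia)) as Hk. unfold Rabs in Hk.
      destruct (Rcase_abs (xs (phi k) m)); lra. }
    destruct (ValAdh_subseq _ _ Hxm) as [psi [Hpsi Hcv]].
    exists (fun k => phi (psi k)), (fun i => if Nat.eqb i m then xm else x i). split.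
    + intros a b Hab. apply Hphi, Hpsi, Hab.
    + intros i Hi. destruct (Nat.eqb_spec i m) as [->|Him]; [exact Hcv|].
      apply (Un_cv_subseq (fun k => xs (phi k) i)); [exact Hpsi|]. apply Hx. lia.
Qed.

Lemma inf_approx (E : R -> Prop) :
  (exists y, E y) -> (exists K, forall y, E y -> K <= y) ->
  exists m, (forall y, E y -> m <= y) /\
            forall eps, 0 < eps -> exists y, E y /\ y < m + eps.
Proof.
  intros [y0 Hy0] [K HK].
  destruct (completeness (fun z => E (- z))) as [L [HLub HLleast]].
  - exists (- K). intros z Hz. specialize (HK _ Hz). lra.
  - exists (- y0). now rewrite Ropp_involutive.
  - exists (- L). split.
    + intros y Hy. assert (- y <= L) by (apply HLub; now rewrite Ropp_involutive). lra.
    + intros eps Heps. apply NNPP. intros Hno.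
      assert (L <= L - eps); [|lra].
      apply HLleast. intros z Hz. apply Rnot_lt_le. intros Hlt.
      apply Hno. exists (- z). split; [exact Hz|lra].
Qed.

Lemma qform_min_on_sphere n A : (0 < n)%nat ->
  exists x0, dot n x0 x0 = 1 /\ forall x, dot n x x = 1 -> qform n A x0 <= qform n A x.
Proof.
  intros Hn.
  destruct (inf_approx (fun y => exists x, dot n x x = 1 /\ y = qform n A x))
    as [m [Hlb Happrox]].
  - destruct (exists_unit_vec n Hn) as [x Hx]. now exists (qform n A x), x.
  - eexists. intros y [x [Hx ->]]. now apply qform_ge_entry_bound.
  - assert (Hseq : forall k, exists x, dot n x x = 1 /\ qform n A x < m + / (INR k + 1)).
    { intros k. destruct (Happrox (/ (INR k + 1)) (RinvN_pos k)) as [y [[x [Hx ->]] Hy]].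
      now exists x. }
    destruct (choice _ Hseq) as [xs Hxs].
    destruct (bounded_vec_seq_subseq n xs) as [phi [x0 [Hphi Hcv]]].
    { intros k i Hi. destruct (Hxs k) as [Hk _]. apply Rabs_le.
      pose proof (sqr_le_dot_self n (xs k) i Hi). rewrite Hk in *. split; nra. }
    assert (Hdot : Un_cv (fun k => dot n (xs (phi k)) (xs (phi k))) (dot n x0 x0))
      by (apply Un_cv_rsum; intros; apply CV_mult; apply Hcv; assumption).
    assert (Hq : Un_cv (fun k => qform n A (xs (phi k))) (qform n A x0)).
    { apply Un_cv_rsum. intros i Hi. apply CV_mult; [now apply Hcv|].
      apply Un_cv_rsum. intros j Hj. apply CV_mult; [apply Un_cv_const|now apply Hcv]. }
    assert (Hx0 : dot n x0 x0 = 1).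
    { apply (UL_sequence _ _ _ Hdot). apply (Un_cv_ext (fun _ => 1)); [|apply Un_cv_const].
      intros k. symmetry. apply Hxs. }
    exists x0. split; [exact Hx0|]. intros x Hx.
    apply Rle_trans with m; [|apply Hlb; now exists x].
    assert (Hbound : forall k, qform n A (xs (phi k)) <= m + / (INR k + 1)).
    { intros k. destruct (Hxs (phi k)) as [_ Hk].
      assert (/ (INR (phi k) + 1) <= / (INR k + 1)); [|lra].
      apply Rinv_le_contravar; [pose proof (pos_INR k); lra|].
      apply Rplus_le_compat_r, le_INR, strictly_increasing_ge, Hphi. }
    rewrite <- (Rplus_0_r m). apply (Rle_cv_lim Hbound Hq).
    apply CV_plus; [apply Un_cv_const|exact RinvN_cv].
Qed.

Lemma lambda_min_le_rayleigh n A l x :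
  symmetric n A -> is_lambda_min n A l -> l * dot n x x <= qform n A x.
Proof.
  intros HA [[v [[i0 [Hi0 _]] _]] Hleast].
  destruct (qform_min_on_sphere n A) as [x0 [Hx0 Hmin]]; [lia|].
  assert (Hhom : forall x, qform n A x0 * dot n x x <= qform n A x).
  { intros y. pose proof (dot_self_nonneg n y).
    destruct (Req_dec (dot n y y) 0) as [Hy0|Hy0].
    - rewrite (qform_eq0 n A y Hy0), Hy0. lra.
    - set (c := / sqrt (dot n y y)).
      assert (Hc : c * c * dot n y y = 1).
      { unfold c. rewrite <- Rinv_mult, sqrt_sqrt by lra. field. lra. }
      specialize (Hmin (fun i => c * y i)).
      rewrite qform_scal in Hmin.
      assert (Hcy : dot n (fun i => c * y i) (fun i => c * y i) = 1).
      { rewrite <- Hc. unfold dot. rewrite <- rsum_scal. apply rsum_ext. intros; ring. }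
      specialize (Hmin Hcy).
      assert (0 < c * c) by (apply Rmult_lt_0_compat; apply Rinv_0_lt_compat, sqrt_lt_R0; lra).
      apply Rmult_le_reg_l with (c * c); [assumption|].
      replace (c * c * (qform n A x0 * dot n y y)) with (qform n A x0 * (c * c * dot n y y))
        by ring. rewrite Hc. lra. }
  pose proof (Hleast _ (eigenvalue_of_sphere_min n A x0 HA Hx0 Hhom)).
  pose proof (Hhom x). pose proof (dot_self_nonneg n x). nra.
Qed.

Lemma qform_madd n H M x : qform n (madd H M) x = qform n H x + qform n M x.
Proof.
  unfold qform, dot. rewrite <- rsum_add. apply rsum_ext. intros i _.
  unfold mv, madd. rewrite <- Rmult_plus_distr_l, <- rsum_add.
  f_equal. apply rsum_ext. intros. ring.
Qed.

Lemma lambda_min_sum_mul_norm_le n H M lH lM s g r :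
  symmetric n H -> symmetric n M -> is_lambda_min n H lH -> is_lambda_min n M lM ->
  (forall i, (i < n)%nat -> mv n (madd H M) s i = - g i + r i) ->
  (lH + lM) * norm n s <= norm n g + norm n r.
Proof.
  intros HH HM HlH HlM Hs.
  assert (Hq : qform n (madd H M) s = - dot n s g + dot n s r).
  { transitivity (dot n s (fun i => (-1) * g i + 1 * r i)).
    - apply rsum_ext. intros i Hi. rewrite Hs by exact Hi. ring.
    - rewrite dot_combr. ring. }
  pose proof (lambda_min_le_rayleigh n H lH s HH HlH).
  pose proof (lambda_min_le_rayleigh n M lM s HM HlM).
  rewrite qform_madd in Hq.
  pose proof (dot_le_norm_mul n s g). pose proof (dot_le_norm_mul n s r).
  pose proof (Rle_abs (dot n s r)). pose proof (Rle_abs (- dot n s g)).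
  rewrite Rabs_Ropp in *. rewrite <- norm_sqr in *.
  pose proof (sqrt_pos (dot n s s)). fold (norm n s) in *.
  assert ((lH + lM) * norm n s * norm n s <= (norm n g + norm n r) * norm n s) by lra.
  destruct (Req_dec (norm n s) 0) as [Hs0|Hs0]; [rewrite Hs0, Rmult_0_r;
    apply Rplus_le_le_0_compat; apply sqrt_pos|].
  apply Rmult_le_reg_r with (norm n s); lra.
Qed.

Lemma ln_le x y : 0 < x -> x <= y -> ln x <= ln y.
Proof. intros Hx [Hxy| ->]; [left; now apply ln_increasing | right; reflexivity]. Qed.

Lemma exp_le x y : x <= y -> exp x <= exp y.
Proof. intros [Hxy| ->]; [left; now apply exp_increasing | right; reflexivity]. Qed.

Lemma Rpower_balance a b t S alpha :
  0 <= alpha -> 0 < a -> 0 < b -> 0 < t -> 0 < S ->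
  t <= a * Rpower S alpha -> t * S <= b ->
  t <= Rpower a (/ (1 + alpha)) * Rpower b (alpha / (1 + alpha)).
Proof.
  intros Ha Ha0 Hb0 Ht HS Hta HtS.
  apply ln_le in Hta; [|exact Ht]. apply ln_le in HtS; [|now apply Rmult_lt_0_compat].
  rewrite ln_mult, ln_Rpower in Hta by (try apply exp_pos; lra).
  rewrite ln_mult in HtS by lra.
  assert (Hlog : (1 + alpha) * ln t <= ln a + alpha * ln b).
  { assert (alpha * ln S <= alpha * (ln b - ln t)) by (apply Rmult_le_compat_l; lra). lra. }
  unfold Rpower. rewrite <- exp_plus, <- (exp_ln t) by exact Ht. apply exp_le.
  apply Rmult_le_reg_l with (1 + alpha); [lra|].
  replace ((1 + alpha) * (/ (1 + alpha) * ln a + alpha / (1 + alpha) * ln b))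
    with (ln a + alpha * ln b) by (field; lra).
  exact Hlog.
Qed.

Lemma powr_Rpower x y : 0 < x -> powr x y = Rpower x y.
Proof. intros Hx. unfold powr. destruct (Req_EM_T x 0); [lra|reflexivity]. Qed.

Lemma Rpower_le_base x y : 1 <= x -> 0 <= y <= 1 -> 1 <= Rpower x y <= x.
Proof.
  intros Hx Hy. split.
  - rewrite <- (Rpower_O x) at 1 by lra. apply Rle_Rpower; lra.
  - apply Rle_trans with (Rpower x 1); [apply Rle_Rpower; lra|]. rewrite Rpower_1; lra.
Qed.

Lemma Rdiv_unit_interval x z : 0 <= x <= z -> 0 < z -> 0 <= x / z <= 1.
Proof.
  intros Hx Hz. split.
  - apply Rmult_le_pos; [lra|]. left. now apply Rinv_0_lt_compat.
  - apply Rmult_le_reg_r with z; [exact Hz|]. unfold Rdiv.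
    rewrite Rmult_assoc, Rinv_l by lra. lra.
Qed.

Lemma lambda_sum_le_bound alpha c kbar lH lM S G :
  0 <= alpha <= 1 -> 1 <= c -> 1 < kbar -> 0 < S -> 0 <= G ->
  (lH + lM) * S <= c * G -> lM <= kbar * Rpower S alpha ->
  lH + lM <= 2 * Rpower kbar (1 / (1 + alpha)) * c
             * Rmax (Rabs lH) (powr G (alpha / (1 + alpha))).
Proof.
  intros Ha Hc Hkbar HS HG HtS HlM.
  set (beta := 1 / (1 + alpha)).
  assert (Hbeta : 0 <= beta <= 1).
  { apply Rdiv_unit_interval; lra. }
  assert (Hab : 0 <= alpha / (1 + alpha) <= 1).
  { apply Rdiv_unit_interval; lra. }
  pose proof (Rpower_le_base kbar beta ltac:(lra) Hbeta) as Hkb.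
  pose proof (Rmax_l (Rabs lH) (powr G (alpha / (1 + alpha)))).
  pose proof (Rmax_r (Rabs lH) (powr G (alpha / (1 + alpha)))).
  pose proof (Rabs_pos lH). pose proof (Rle_abs lH). pose proof (Rle_abs (- lH)).
  rewrite Rabs_Ropp in *.
  assert (Hkap : 2 <= 2 * Rpower kbar beta * c).
  { replace 2 with (2 * 1 * 1) at 1 by ring.
    apply Rmult_le_compat; try apply Rmult_le_compat; lra. }
  destruct (Rle_dec lM (Rabs lH)) as [Hsmall|Hlarge].
  - apply Rle_trans with (2 * Rpower kbar beta * c * Rabs lH); [nra|].
    apply Rmult_le_compat_l; lra.
  - set (t := lH + lM) in *.
    assert (Ht : 0 < t) by (unfold t; lra).
    assert (HG0 : 0 < G) by (apply Rmult_lt_0_compat with (r2 := S) in Ht; nra).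
    assert (Hta : t <= 2 * kbar * Rpower S alpha) by (unfold t; lra).
    pose proof (Rpower_balance (2 * kbar) (c * G) t S alpha ltac:(lra) ltac:(lra)
                  ltac:(nra) Ht HS Hta HtS) as Hbal.
    rewrite <- !Rpower_mult_distr in Hbal by lra.
    replace (/ (1 + alpha)) with beta in Hbal by (unfold beta; field; lra).
    rewrite powr_Rpower by exact HG0.
    pose proof (Rpower_le_base 2 beta ltac:(lra) Hbeta).
    pose proof (Rpower_le_base c (alpha / (1 + alpha)) Hc Hab).
    assert (HGpow : 0 < Rpower G (alpha / (1 + alpha))) by apply exp_pos.
    apply Rle_trans with (2 * Rpower kbar beta * c * Rpower G (alpha / (1 + alpha))).
    + apply Rle_trans with (1 := Hbal).
      replace (2 * Rpower kbar beta * c * Rpower G (alpha / (1 + alpha)))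
        with (2 * Rpower kbar beta * (c * Rpower G (alpha / (1 + alpha)))) by ring.
      apply Rmult_le_compat; try apply Rmult_le_compat; try apply Rmult_le_pos; lra.
    + apply Rmult_le_compat_l; [|rewrite <- powr_Rpower by exact HG0]; lra.
Qed.

Theorem lemma2p2 (n : nat) (H M : mat) (g s r : vec)
  (alpha krg krs kbar lH lM : R) :
  0 <= alpha <= 1 -> 0 <= krg < 1 -> 0 < krs ->
  symmetric n H -> symmetric n M ->
  nonzerov n s ->
  (forall i, (i < n)%nat -> mv n (madd H M) s i = - g i + r i) ->
  norm n r <= Rmin (krg * norm n g) (krs * norm n (mv n M s)) ->
  psd n M -> psd n (madd H M) ->
  1 < kbar ->
  is_lambda_min n H lH -> is_lambda_min n M lM ->
  lM <= kbar * powr (norm n s) alpha ->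
  lH + lM <= (2 * powr kbar (1 / (1 + alpha)) * (1 + krg))
             * Rmax (Rabs lH) (powr (norm n g) (alpha / (1 + alpha))).
Proof.
  intros Ha Hkrg _ HH HM Hs Heq Hr _ _ Hkbar HlH HlM HlM_bound.
  assert (HS : 0 < norm n s) by (apply sqrt_lt_R0, dot_self_gt0, Hs).
  assert (Hrg : norm n r <= krg * norm n g) by (eapply Rle_trans; [exact Hr|apply Rmin_l]).
  pose proof (lambda_min_sum_mul_norm_le n H M lH lM s g r HH HM HlH HlM Heq) as Hkey.
  rewrite powr_Rpower in HlM_bound by exact HS.
  rewrite powr_Rpower by lra.
  apply lambda_sum_le_bound with (S := norm n s); try lra.
  apply sqrt_pos.
Qed.
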